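(* Let $q$ be a nonzero real number with $q\neq-1$, and for $k\ge0$ let $$A_k=\begin{pmatrix} x & q^k(x^2+s)\\ 1 & q^kx\end{pmatrix}.$$ Then for every $n\ge1$, $$\begin{pmatrix} T_n(x,s,q) & (x^2+s)U_{n-1}(x,qs,q)\\ U_{n-1}(x,s,q) & T_n\!\left(x,\frac{s}{q},q\right)\end{pmatrix}=A_{n-1}A_{n-2}\cdots A_0.$$
   Context: $T_0=1$, $T_1=x$, $T_n(x,s,q)=(1+q^{n-1})x\,T_{n-1}(x,s,q)+q^{n-1}s\,T_{n-2}(x,s,q)$ for $n\ge2$; $U_{-1}=0$, $U_0=1$, $U_n(x,s,q)=(1+q^{n})x\,U_{n-1}(x,s,q)+q^{n-1}s\,U_{n-2}(x,s,q)$ for $n\ge1$. *)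

From HB Require Import structures.
From mathcomp Require Import all_boot all_order all_algebra.
Set Implicit Arguments. Unset Strict Implicit. Unset Printing Implicit Defensive.
Import Order.TTheory GRing.Theory Num.Theory.
Local Open Scope ring_scope.

Fixpoint Tpoly (R : nzRingType) (x s q : R) (n : nat) : R :=
  match n with
  | 0%N => 1
  | 1%N => x
  | (m.+1 as m1).+1 =>
      (1 + q ^+ m1) * x * Tpoly x s q m1 + q ^+ m1 * s * Tpoly x s q m
  end.

(* U_{-1} = 0, U_0 = 1, U_n = (1+q^n) x U_{n-1} + q^(n-1) s U_{n-2}  (n >= 1);
   defined here for n >= 0, with the value U_{-1} = 0 used at n = 1. *)
Fixpoint Upoly (R : nzRingType) (x s q : R) (n : nat) : R :=
  match n with
  | 0%N => 1
  | 1%N => (1 + q) * x * 1 + q ^+ 0 * s * 0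
  | (m.+1 as m1).+1 =>
      (1 + q ^+ m1.+1) * x * Upoly x s q m1 + q ^+ m1 * s * Upoly x s q m
  end.

Definition mx2 (R : nzRingType) (a b c d : R) : 'M[R]_2 :=
  \matrix_(i < 2, j < 2)
    if (i == 0 :> nat) then (if (j == 0 :> nat) then a else b)
    else (if (j == 0 :> nat) then c else d).

Definition Amx (R : nzRingType) (x s q : R) (k : nat) : 'M[R]_2 :=
  mx2 x (q ^+ k * (x ^+ 2 + s)) 1 (q ^+ k * x).

From HB Require Import structures.
From mathcomp Require Import all_boot all_order all_algebra.
From mathcomp Require Import ring.
Set Implicit Arguments. Unset Strict Implicit. Unset Printing Implicit Defensive.
Import Order.TTheory GRing.Theory Num.Theory.
Local Open Scope ring_scope.

(* Multiplying [A_k] onto the claimed product for [n = k] gives the claimed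
   product for [n = k + 1] entrywise, once the three-term recurrences for [T]
   and [U] are traded for first-order mixed recurrences.  These hold jointly
   for the pair [(T(s), U(s))] and for the pair [(T(t), U(q^2 t))], the latter
   used with [t = s / q]. *)

Section Recurrences.

Variables (R : comNzRingType) (x q : R).

Lemma TpolySS (s : R) (k : nat) :
  Tpoly x s q k.+2 = (1 + q ^+ k.+1) * x * Tpoly x s q k.+1
                     + q ^+ k.+1 * s * Tpoly x s q k.
Proof. by []. Qed.

Lemma UpolySS (s : R) (k : nat) :
  Upoly x s q k.+2 = (1 + q ^+ k.+2) * x * Upoly x s q k.+1
                     + q ^+ k.+1 * s * Upoly x s q k.
Proof. by []. Qed.

Lemma Tpoly_Upoly_rec (s : R) (k : nat) :
  Tpoly x s q k.+2 = x * Tpoly x s q k.+1 + q ^+ k.+1 * (x ^+ 2 + s) * Upoly x s q k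
  /\ Upoly x s q k.+1 = Tpoly x s q k.+1 + q ^+ k.+1 * x * Upoly x s q k.
Proof.
elim: k => [|k [IHT IHU]]; first by rewrite /= !expr0 !expr1; split; ring.
rewrite TpolySS UpolySS IHT IHU exprS; split; ring.
Qed.

Lemma Upoly_Tpoly_rec (t : R) (k : nat) :
  Upoly x (q ^+ 2 * t) q k.+1
    = x * Upoly x (q ^+ 2 * t) q k + q ^+ k.+1 * Tpoly x t q k.+1
  /\ Tpoly x t q k.+2
    = (x ^+ 2 + q * t) * Upoly x (q ^+ 2 * t) q k + q ^+ k.+1 * x * Tpoly x t q k.+1.
Proof.
elim: k => [|k [IHU IHT]]; first by rewrite /= !expr0 !expr1; split; ring.
rewrite UpolySS (TpolySS t k.+1) IHU IHT exprS; split; ring.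
Qed.

End Recurrences.

Lemma mulmx_mx2 (R : nzRingType) (a b c d a' b' c' d' : R) :
  mx2 a b c d *m mx2 a' b' c' d'
  = mx2 (a * a' + b * c') (a * b' + b * d') (c * a' + d * c') (c * b' + d * d').
Proof.
apply/matrixP => i j; rewrite !mxE !big_ord_recl big_ord0 !mxE /= addr0.
by case: i => [[|[|//]] ?]; case: j => [[|[|//]] ?].
Qed.

Lemma Amx_mul_mx2_TU (R : comNzRingType) (x q s t : R) (k : nat)
    (s_qt : s = q * t) :
  Amx x s q k.+1 *m mx2 (Tpoly x s q k.+1) ((x ^+ 2 + s) * Upoly x (q ^+ 2 * t) q k)
                        (Upoly x s q k) (Tpoly x t q k.+1)
  = mx2 (Tpoly x s q k.+2) ((x ^+ 2 + s) * Upoly x (q ^+ 2 * t) q k.+1)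
        (Upoly x s q k.+1) (Tpoly x t q k.+2).
Proof.
have [-> ->] := Tpoly_Upoly_rec x q s k.
have [-> ->] := Upoly_Tpoly_rec x q t k.
by rewrite /Amx mulmx_mx2 s_qt; congr mx2; ring.
Qed.

Theorem theorem2p9 (R : realFieldType) (q x s : R) (n : nat) :
  q != 0 -> q != -1 -> (1 <= n)%N ->
  mx2 (Tpoly x s q n) ((x ^+ 2 + s) * Upoly x (q * s) q n.-1)
      (Upoly x s q n.-1) (Tpoly x (s / q) q n)
  = \prod_(i < n) Amx x s q (n.-1 - i)%N.
Proof.
move=> q0 _; case: n => [//|n] _; rewrite [n.+1.-1]/=.
have s_qt : s = q * (s / q) by rewrite mulrC divfK.
have -> : q * s = q ^+ 2 * (s / q) by rewrite expr2 -mulrA -s_qt.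
elim: n => [|n IH].
  by rewrite big_ord1 /Amx expr0 !mul1r /= mulr1.
rewrite big_ord_recl subn0.
under eq_bigr => i _ do rewrite /= subSS.
by rewrite -IH -mulmxE (Amx_mul_mx2_TU x n s_qt).
Qed.
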